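(* Let $n\ge 2$ and let $F_1,\ldots,F_n$ be finite fields with $|F_1|\le\cdots\le|F_n|$. Suppose that one of the following holds: (i) $F_1$ has characteristic $2$; (ii) every $F_i$ has odd characteristic and $F_1\times F_2\not\cong \mathbb{Z}_3\times\mathbb{Z}_3$. Then $\chi\big(T(\Gamma(F_1\times\cdots\times F_n))\big)=|F_2|\cdots|F_n|$.
   Context: For a commutative ring $R$ with identity, $Z(R)$ is its set of zero-divisors (including $0$), and the total graph $T(\Gamma(R))$ is the simple graph with vertex set $R$ in which distinct $x,y$ are adjacent iff $x+y\in Z(R)$. $\chi$ denotes the chromatic number. *)

From HB Require Import structures.
From mathcomp Require Import all_boot all_order all_algebra all_field.
Set Implicit Arguments. Unset Strict Implicit. Unset Printing Implicit Defensive.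
Import GRing.Theory.
Local Open Scope ring_scope.

Section ProdRing.
Variables (n : nat) (F : 'I_n -> finFieldType).

Definition prodR := {dffun forall i : 'I_n, F i}.

Definition prod_zero : prodR := [ffun i => 0].
Definition prod_add (x y : prodR) : prodR := [ffun i => x i + y i].
Definition prod_mul (x y : prodR) : prodR := [ffun i => x i * y i].

Definition zero_divisor (x : prodR) : bool :=
  [exists z : prodR, (z != prod_zero) && (prod_mul x z == prod_zero)].

Definition total_adj (x y : prodR) : bool :=
  (x != y) && zero_divisor (prod_add x y).
End ProdRing.

Section Chromatic.
Variables (V : finType) (adj : rel V).

Definition colorable (k : nat) : bool :=
  [exists c : {ffun V -> 'I_k}, [forall x, forall y, adj x y ==> (c x != c y)]].
End Chromatic.

Lemma colorable_card (V : finType) (adj : rel V) :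
  (forall x y, adj x y -> x != y) -> colorable adj #|V|.
Proof.
move=> H; apply/existsP; exists [ffun x => enum_rank x].
apply/forallP=> x; apply/forallP=> y; apply/implyP=> /H.
by rewrite !ffunE; apply: contra => /eqP /enum_rank_inj ->.
Qed.

Lemma total_adj_neq n (F : 'I_n -> finFieldType) (x y : prodR F) :
  total_adj x y -> x != y.
Proof. by case/andP. Qed.

Lemma total_colorable n (F : 'I_n -> finFieldType) :
  exists k, colorable (@total_adj n F) k.
Proof. by exists #|prodR F|; apply: colorable_card; exact: total_adj_neq. Qed.

Definition chi_total n (F : 'I_n -> finFieldType) : nat :=
  ex_minn (total_colorable F).

(* The elements of R = F_1 x ... x F_n with first coordinate 0 form a clique of
   T(Gamma(R)) of size |F_2|...|F_n|, because x + y is a zero-divisor iff one of its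
   coordinates vanishes.  Conversely, a map col from R into this clique is a proper
   colouring as soon as x + y is a unit whenever x <> y and col x = col y.  Such a map
   is built coordinatewise: (x_1, x_2) determines the second coordinate c(x_1, x_2)
   of the colour and an index k in a set I with |I| <= |F_i| for i >= 3, and the i-th
   coordinate is g_k(x_i), where (g_k) is a family of permutations of F_i such that
   g_k u = g_k' u' with k <> k' forces u + u' <> 0.
   In characteristic 2 translations u |-> u + e_k form such a family.  In odd
   characteristic the g_k are inverses of rotations of the chain 0, w, w^2, ... for a
   generator w of the multiplicative group; consecutive links then never sum to 0 as
   long as w <> -1, i.e. |F_i| >= 5, which is why Z_3 x Z_3 is excluded.  For c and k
   one writes an odd field as {0} together with +-e_j (j < h) and uses an explicit
   bijection (a, b) |-> (c, k) of pairs whose colour classes never contain two pairs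
   that are opposite in a coordinate. *)

From HB Require Import structures.
From mathcomp Require Import all_boot all_order all_algebra all_field.
From mathcomp Require Import cyclic zify.
Set Implicit Arguments. Unset Strict Implicit. Unset Printing Implicit Defensive.
Import GRing.Theory.
Local Open Scope ring_scope.

Section ProductRing.
Variables (n : nat) (F : 'I_n -> finFieldType).

Lemma zero_divisorE (x : prodR F) : zero_divisor x = [exists i, x i == 0].
Proof.
apply/existsP/existsP => [[z /andP[nz /eqP xz]] | [i /eqP xi]].
- have [i zi] : exists i, z i != 0.
    apply/existsP; apply: contraNT nz => /existsPn z0.
    by apply/eqP/ffunP => i; rewrite ffunE; apply/eqP/negPn/z0.
  exists i; have := congr1 (fun f : prodR F => f i) xz; rewrite !ffunE => /eqP.
  by rewrite mulf_eq0 (negbTE zi) orbF.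
- exists [ffun j => if j == i then 1 else 0]; apply/andP; split.
    apply/eqP => /(congr1 (fun f : prodR F => f i)); rewrite !ffunE eqxx => /eqP.
    by rewrite oner_eq0.
  by apply/eqP/ffunP => j; rewrite !ffunE; case: eqP => [->|_]; rewrite ?xi ?mul0r ?mulr0.
Qed.

Lemma total_adjE (x y : prodR F) :
  total_adj x y = (x != y) && [exists i, x i + y i == 0].
Proof.
rewrite /total_adj zero_divisorE; congr (_ && _); apply: eq_existsb => i.
by rewrite ffunE.
Qed.

Variable i0 : 'I_n.

Definition zero_slice := [set x : prodR F | x i0 == 0].

Lemma card_zero_slice : #|zero_slice| = (\prod_(i < n | i != i0) #|F i|)%N.
Proof.
pose G i : pred (F i) := if i == i0 then pred1 0 else predT.
have -> : #|zero_slice| = #|(family G : simpl_pred (prodR F))|.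
  apply: eq_card => x; rewrite inE; apply/eqP/familyP => [x0 i | xG].
    by rewrite /G; case: eqP => [->|_] //=; rewrite inE x0.
  by have := xG i0; rewrite /G eqxx inE => /eqP.
rewrite card_family foldrE big_map big_enum /= [RHS]big_mkcond.
apply: eq_bigr => i _; rewrite /G; case: (i =P i0) => [->|_] /=; first exact: card1.
exact: eq_card.
Qed.

Lemma zero_in_slice : prod_zero F \in zero_slice.
Proof. by rewrite inE ffunE. Qed.

Lemma slice_le_colorable k : colorable (@total_adj n F) k -> (#|zero_slice| <= k)%N.
Proof.
case/existsP => c /forallP c_proper.
rewrite -[k]card_ord -(card_in_imset (f := c)); first exact: max_card.
move=> x y; rewrite !inE => /eqP x0 /eqP y0 cxy; apply/eqP; apply: contraT => nxy.
have adj : [exists i, x i + y i == 0] by apply/existsP; exists i0; rewrite x0 y0 addr0.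
by have := c_proper x => /forallP/(_ y); rewrite total_adjE nxy adj cxy eqxx.
Qed.

Definition unit_sum_colouring (col : prodR F -> prodR F) :=
  (forall x, col x \in zero_slice) /\
  (forall x y, col x = col y -> x != y -> forall i, x i + y i != 0).

Lemma chi_total_zero_slice col : unit_sum_colouring col -> chi_total F = #|zero_slice|.
Proof.
case=> colS colP; rewrite /chi_total; case: ex_minnP => m m_col m_min.
apply/eqP; rewrite eqn_leq slice_le_colorable // andbT; apply: m_min.
apply/existsP; exists [ffun x => enum_rank_in zero_in_slice (col x)].
apply/forallP => x; apply/forallP => y; apply/implyP; rewrite total_adjE.
case/andP => nxy /existsP [i /eqP sxy]; rewrite !ffunE; apply/negP => /eqP E.
have : col x = col y.
  by rewrite -(enum_rankK_in zero_in_slice (colS x))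
    -(enum_rankK_in zero_in_slice (colS y)) E.
by move/colP/(_ nxy i); rewrite sxy eqxx.
Qed.

End ProductRing.

Definition separating (F : finFieldType) (I : finType) (g : I -> F -> F) :=
  (forall k, injective (g k)) /\
  (forall k k' u u', k != k' -> g k u = g k' u' -> u + u' != 0).

Definition pair_design (F0 F1 : finFieldType) (I : finType)
    (c : F0 -> F1 -> F1) (idx : F0 -> F1 -> I) :=
  forall a b a' b', c a b = c a' b' -> (a, b) != (a', b') ->
  [/\ a + a' != 0, b + b' != 0 & idx a b != idx a' b'].

Section Assembly.
Variables (n : nat) (F : 'I_n -> finFieldType) (i0 i1 : 'I_n).
Variables (I : finType) (c : F i0 -> F i1 -> F i1) (idx : F i0 -> F i1 -> I).
Variable g : forall i, I -> F i -> F i.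
Hypotheses (i01 : i0 != i1) (c_design : pair_design c idx)
  (g_sep : forall i, i != i0 -> i != i1 -> separating (@g i)).

Definition design_colouring (x : prodR F) : prodR F :=
  [ffun i => dfwith (T := fun i => F i)
     (dfwith (T := fun i => F i) (fun i => @g i (idx (x i0) (x i1)) (x i))
        (c (x i0) (x i1))) (0 : F i0) i].

Lemma design_colouring_at0 x : design_colouring x i0 = 0.
Proof. by rewrite ffunE dfwith_in. Qed.

Lemma design_colouring_at1 x : design_colouring x i1 = c (x i0) (x i1).
Proof. by rewrite ffunE dfwith_out // dfwith_in. Qed.

Lemma design_colouring_at x i : i != i0 -> i != i1 ->
  design_colouring x i = @g i (idx (x i0) (x i1)) (x i).
Proof. by move=> ? ?; rewrite ffunE !dfwith_out 1?eq_sym. Qed.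

Lemma unit_sum_design_colouring : unit_sum_colouring i0 design_colouring.
Proof.
split=> [x|x y Exy nxy i]; first by rewrite inE design_colouring_at0.
have E1 : c (x i0) (x i1) = c (y i0) (y i1) by rewrite -!design_colouring_at1 Exy.
have Eg i' : i' != i0 -> i' != i1 ->
    @g i' (idx (x i0) (x i1)) (x i') = @g i' (idx (y i0) (y i1)) (y i').
  by move=> h0 h1; rewrite -!design_colouring_at // Exy.
have [[e0 e1] | nxy01] := eqVneq (x i0, x i1) (y i0, y i1).
  case/negP: nxy; apply/eqP/ffunP => j.
  have [->|h0] := eqVneq j i0; first by [].
  have [->|h1] := eqVneq j i1; first by [].
  by have := Eg j h0 h1; rewrite e0 e1 => /(proj1 (g_sep h0 h1)).
have [s0 s1 sidx] := c_design E1 nxy01.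
have [->|h0] := eqVneq i i0; first by [].
have [->|h1] := eqVneq i i1; first by [].
exact: (proj2 (g_sep h0 h1)) sidx (Eg i h0 h1).
Qed.

End Assembly.

Lemma chi_total_of_design n (F : 'I_n -> finFieldType) (i0 i1 : 'I_n) (I : finType)
    (c : F i0 -> F i1 -> F i1) (idx : F i0 -> F i1 -> I) :
  i0 != i1 -> pair_design c idx ->
  (forall i, i != i0 -> i != i1 -> exists g : I -> F i -> F i, separating g) ->
  chi_total F = #|zero_slice F i0|.
Proof.
move=> i01 c_design g_sep.
have /fin_all_exists [g gP] :
    forall i, exists g : I -> F i -> F i, i != i0 -> i != i1 -> separating g.
  move=> i; have [h0|h0] := eqVneq i i0; first by exists (fun _ u => u).
  have [h1|h1] := eqVneq i i1; first by exists (fun _ u => u).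
  by have [gi gi_sep] := g_sep i h0 h1; exists gi.
exact: chi_total_zero_slice (unit_sum_design_colouring i01 c_design gP).
Qed.

Lemma injection_of_card_le (I T : finType) : (#|I| <= #|T|)%N ->
  exists e : I -> T, injective e.
Proof.
move=> IT; exists (fun k => enum_val (widen_ord IT (enum_rank k))).
by move=> k k' /enum_val_inj /(congr1 val) /= /val_inj /enum_rank_inj.
Qed.

Lemma separating_pchar2 (F : finFieldType) (I : finType) :
  2 \in [pchar F] -> (#|I| <= #|F|)%N -> exists g : I -> F -> F, separating g.
Proof.
move=> F2 IF; have [e e_inj] := injection_of_card_le IF.
exists (fun k u => u + e k); split=> [k|k k' u u' nkk']; first exact: addIr.
rewrite addr_eq0 (oppr_pchar2 F2) => E; apply: contra nkk' => /eqP uu'.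
by move: E; rewrite uu' => /addrI /e_inj ->.
Qed.

Lemma addrr_eq0 (F : finFieldType) (x : F) :
  2 \notin [pchar F] -> (x + x == 0) = (x == 0).
Proof.
move=> F2; rewrite -mulr2n -mulr_natl mulf_eq0 orb_idl // => h.
by case/negP: F2; rewrite inE h.
Qed.

Definition rot_upto (k j : nat) : nat :=
  if (j < k)%N then j.+1 else if j == k then 0%N else j.

Lemma rot_upto_lt K k j : (k < K)%N -> (j < K)%N -> (rot_upto k j < K)%N.
Proof. by rewrite /rot_upto; case: (ltngtP j k) => /=; lia. Qed.

Lemma rot_upto_inj k : injective (rot_upto k).
Proof. by move=> j j'; rewrite /rot_upto; case: (ltngtP j k); case: (ltngtP j' k) => /=; lia. Qed.

Lemma rot_upto_pair k k' j : k != k' ->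
  let s := rot_upto k j in let s' := rot_upto k' j in
  [\/ s = s' /\ (0 < s)%N, s = 0%N /\ (0 < s')%N, s' = 0%N /\ (0 < s)%N |
      (0 < j)%N /\ (s = j /\ s' = j.+1 \/ s = j.+1 /\ s' = j)].
Proof.
move=> /eqP nk /=; rewrite /rot_upto.
case: (ltngtP j k) => h1; case: (ltngtP j k') => h2 /=;
  first [ by apply: Or41; lia | by apply: Or42; lia | by apply: Or43; lia
        | by apply: Or44; lia | lia ].
Qed.

Section ChainRotation.
Variables (F : finFieldType) (K : nat) (c : nat -> F).
Hypotheses (F2 : 2 \notin [pchar F]) (c0 : c 0%N = 0)
  (c_inj : forall j j', (j < K)%N -> (j' < K)%N -> c j = c j' -> j = j')
  (c_neq0 : forall j, (0 < j)%N -> (j < K)%N -> c j != 0)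
  (cS_add_neq0 : forall j, (0 < j)%N -> (j.+1 < K)%N -> c j + c j.+1 != 0).

Definition chain_index (z : F) : option 'I_K := [pick j : 'I_K | c j == z].

Lemma chain_indexP z :
  (forall j, chain_index z = Some j -> c j = z) /\
  (chain_index z = None -> forall j, (j < K)%N -> c j != z).
Proof.
rewrite /chain_index; case: pickP => [j /eqP cj | nc]; split=> //.
- by move=> j' [<-].
- by move=> _ j jK; rewrite (nc (Ordinal jK)).
Qed.

Definition chain_rot (k : nat) (z : F) : F :=
  if chain_index z is Some j then c (rot_upto k j) else z.

Lemma chain_rot_inj k : (k < K)%N -> injective (chain_rot k).
Proof.
move=> kK z z'; rewrite /chain_rot.
have [cz zN] := chain_indexP z; have [cz' z'N] := chain_indexP z'.
case: (chain_index z) cz zN => [j|] cz zN; case: (chain_index z') cz' z'N => [j'|] cz' z'N.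
- move=> /c_inj E; rewrite -(cz j) // -(cz' j') //.
  by rewrite (rot_upto_inj (E (rot_upto_lt kK (ltn_ord j)) (rot_upto_lt kK (ltn_ord j')))).
- by move=> E; have := z'N erefl _ (rot_upto_lt kK (ltn_ord j)); rewrite E eqxx.
- by move=> E; have := zN erefl _ (rot_upto_lt kK (ltn_ord j')); rewrite E eqxx.
- by [].
Qed.

(* The two images are equal and nonzero, or one of them is [c 0 = 0], or they are
   consecutive links of the chain. *)
Lemma chain_rot_add_neq0 k k' z : (k < K)%N -> (k' < K)%N -> k != k' ->
  chain_rot k z + chain_rot k' z != 0.
Proof.
move=> kK k'K kk'; rewrite /chain_rot; have [_ zN] := chain_indexP z.
case: (chain_index z) zN => [j _|zN]; last first.
  by rewrite addrr_eq0 // eq_sym -c0 zN // (leq_ltn_trans (leq0n k) kK).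
have sK := rot_upto_lt kK (ltn_ord j); have s'K := rot_upto_lt k'K (ltn_ord j).
case: (rot_upto_pair j kk') => [[E s0]|[E s'0]|[E s0]|[j0 [[E E']|[E E']]]].
- by rewrite E addrr_eq0 // c_neq0 // -E.
- by rewrite E c0 add0r c_neq0.
- by rewrite E c0 addr0 c_neq0.
- by rewrite E E' cS_add_neq0 // -E'.
- by rewrite E E' addrC cS_add_neq0 // -E.
Qed.

End ChainRotation.

Lemma eq_mod_small N j j' : (0 < j <= N)%N -> (0 < j' <= N)%N ->
  (j = j' %[mod N])%N -> j = j'.
Proof.
have modE m : (0 < m <= N)%N -> (m %% N = if m == N then 0 else m)%N.
  case/andP=> m0 mN; case: eqP => [->|ne]; first by rewrite modnn.
  by rewrite modn_small // ltn_neqAle mN andbT; apply/eqP.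
move=> jN j'N; rewrite (modE _ jN) (modE _ j'N).
by case: eqP => [->|ne1]; case: eqP => [->|ne2] //; lia.
Qed.

Lemma exists_prim_root_card (F : finFieldType) : exists w : F, (#|F|.-1).-primitive_root w.
Proof.
have F1 := finNzRing_gt1 F.
have : has (#|F|.-1).-primitive_root (enum [pred x : F | x != 0]).
  apply: has_prim_root; [by rewrite -subn1 subn_gt0 | | exact: enum_uniq |].
  - apply/allP => x; rewrite mem_enum inE => x0; rewrite unity_rootE.
    have := expf_card x; rewrite -{1}(prednK (ltnW F1)) exprS => xF.
    by apply/eqP; apply: (mulfI x0); rewrite mulr1 xF.
  - by rewrite -cardE cardC1.
by case/hasP => w _ pw; exists w.
Qed.

(* The chain 0, w, w^2, ..., w^(K-1) for a generator w of the multiplicative group. *)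
Lemma exists_chain (F : finFieldType) K : (K <= #|F|)%N -> (K <= 2 \/ 5 <= #|F|)%N ->
  exists c : nat -> F, [/\ c 0%N = 0,
    forall j j', (j < K)%N -> (j' < K)%N -> c j = c j' -> j = j',
    forall j, (0 < j)%N -> (j < K)%N -> c j != 0 &
    forall j, (0 < j)%N -> (j.+1 < K)%N -> c j + c j.+1 != 0].
Proof.
move=> KF K2F5; have [w pw] := exists_prim_root_card F.
have N0 : (0 < #|F|.-1)%N by rewrite -subn1 subn_gt0 finNzRing_gt1.
have w0 : w != 0.
  apply: contra_eqN (prim_expr_order pw) => /eqP ->.
  by rewrite expr0n eqn0Ngt N0 eq_sym oner_eq0.
have wj_neq0 j : w ^+ j != 0 by rewrite expf_eq0 (negbTE w0) andbF.
exists (fun j => if j == 0%N then 0 else w ^+ j); split => // [j j' jK j'K|j j0 _|j j0 jK].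
- case: eqP => [->|j0]; case: eqP => [->|j'0] //.
  + by move/eqP; rewrite eq_sym (negbTE (wj_neq0 _)).
  + by move/eqP; rewrite (negbTE (wj_neq0 _)).
  + by move/eqP; rewrite (eq_prim_root_expr pw) => /eqP; apply: eq_mod_small; lia.
- by rewrite (negbTE (lt0n_neq0 j0)).
rewrite (negbTE (lt0n_neq0 j0)) /= exprS mulrC -{1}[w ^+ j]mulr1 -mulrDr mulf_eq0.
rewrite (negbTE (wj_neq0 _)) /= addr_eq0; apply/negP => /eqP w_N1.
have : (#|F|.-1 %| 2)%N by rewrite (prim_order_dvd pw) -[w]opprK -w_N1 sqrrN expr1n.
move/dvdn_leq => /(_ isT); rewrite -subn1; lia.
Qed.

Lemma separating_odd (F : finFieldType) (I : finType) : 2 \notin [pchar F] ->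
  (#|I| <= #|F|)%N -> (#|I| <= 2 \/ 5 <= #|F|)%N -> exists g : I -> F -> F, separating g.
Proof.
move=> F2 IF IF5; have [c [c0 c_inj c_neq0 cS]] := exists_chain IF IF5.
pose rot (k : I) := chain_rot_inj c_inj (ltn_ord (enum_rank k)).
exists (fun k => invF (rot k)); split=> [k|k k' u u' kk' E].
  exact: can_inj (f_invF (rot k)).
rewrite -[u](f_invF (rot k)) -[u'](f_invF (rot k')) -E.
apply: chain_rot_add_neq0 => //.
by apply: contra kk' => /eqP /val_inj /enum_rank_inj ->.
Qed.

Lemma exists_separating (F : finFieldType) (I : finType) : (#|I| <= #|F|)%N ->
  [|| 2 \in [pchar F], #|I| <= 2 | 5 <= #|F|]%N -> exists g : I -> F -> F, separating g.
Proof.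
move=> IF; have [F2 _ | F2 /= IF5] := boolP (2 \in [pchar F]).
  exact: separating_pchar2.
by apply: separating_odd => //; apply/orP.
Qed.

(* [signed h] stands for {0} together with +e_j and -e_j for j < h. *)
Definition signed (h : nat) := option (bool * 'I_h).

Definition sopp h (a : signed h) : signed h :=
  if a is Some (s, j) then Some (~~ s, j) else None.

Lemma card_signed h : #|{: signed h}| = (h.*2).+1.
Proof. by rewrite card_option card_prod card_bool card_ord mul2n. Qed.

Section OddFieldSigned.
Variables (F : finFieldType) (F2 : 2 \notin [pchar F]).

(* One element out of each pair {x, -x} of nonzero elements. *)
Definition pos_half := [set x : F | (x != 0) && (enum_rank x < enum_rank (- x))%N].

Lemma pos_half_neq0 x : x \in pos_half -> x != 0.
Proof. by rewrite inE => /andP[]. Qed.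

Lemma pos_half_opp x : x \in pos_half -> - x \notin pos_half.
Proof.
rewrite !inE opprK => /andP[_ lt]; apply/negP => /andP[_ gt].
by have := ltn_trans lt gt; rewrite ltnn.
Qed.

Lemma pos_half_cover x : x != 0 -> (x \in pos_half) || (- x \in pos_half).
Proof.
move=> x0; rewrite !inE opprK oppr_eq0 x0 /= -neq_ltn.
apply: contra x0 => /eqP /val_inj /enum_rank_inj xN.
by rewrite -(addrr_eq0 _ F2) {1}xN addNr.
Qed.

Definition signed_enc (a : signed #|pos_half|) : F :=
  if a is Some (s, j) then (if s then enum_val j else - enum_val j) else 0.

Lemma signed_enc_opp a : signed_enc (sopp a) = - signed_enc a.
Proof. by case: a => [[[] j]|] /=; rewrite ?opprK ?oppr0. Qed.

Lemma signed_enc_inj : injective signed_enc.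
Proof.
have vP := @enum_valP _ (mem pos_half).
case=> [[[] j]|]; case=> [[[] j']|] //=.
- by move/enum_val_inj ->.
- by move=> E; have := pos_half_opp (vP j'); rewrite -E vP.
- by move=> /eqP; rewrite (negbTE (pos_half_neq0 (vP j))).
- by move=> E; have := pos_half_opp (vP j); rewrite E vP.
- by move/oppr_inj/enum_val_inj ->.
- by move=> /eqP; rewrite oppr_eq0 (negbTE (pos_half_neq0 (vP j))).
- by move=> /esym/eqP; rewrite (negbTE (pos_half_neq0 (vP j'))).
- by move=> /esym/eqP; rewrite oppr_eq0 (negbTE (pos_half_neq0 (vP j'))).
Qed.

Lemma signed_enc_surj x : exists a, signed_enc a = x.
Proof.
have [->|x0] := eqVneq x 0; first by exists None.
case/orP: (pos_half_cover x0) => xP.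
  by exists (Some (true, enum_rank_in xP x)); rewrite /= enum_rankK_in.
by exists (Some (false, enum_rank_in xP (- x))); rewrite /= enum_rankK_in ?opprK.
Qed.

Lemma signed_enc_bij : bijective signed_enc.
Proof.
pose dec x := odflt None [pick a | signed_enc a == x].
have decK : cancel dec signed_enc.
  move=> x; rewrite /dec; case: pickP => [a /eqP //|none].
  by have [a ax] := signed_enc_surj x; have := none a; rewrite ax eqxx.
by exists dec => // a; apply: signed_enc_inj; rewrite decK.
Qed.

End OddFieldSigned.

Lemma signed_model (F : finFieldType) : 2 \notin [pchar F] ->
  exists h (enc : signed h -> F),
    [/\ bijective enc, forall a, enc (sopp a) = - enc a & #|F| = (h.*2).+1].
Proof.
move=> F2; exists #|pos_half F|, (@signed_enc F); split.
- exact: signed_enc_bij.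
- exact: signed_enc_opp.
- by rewrite -(bij_eq_card (signed_enc_bij F2)) card_signed.
Qed.

Lemma addr_eq_l (V : zmodType) (x y : V) : (x + y == x) = (y == 0).
Proof. by rewrite -{2}[x]addr0 (inj_eq (@addrI _ x)). Qed.

(* The map
   (a, b) |-> (design_col a b, design_idx a b) is a bijection (inverse
   [design_dec]), and within a colour class z every first coordinate +-e_j has
   the sign [fst_sign z j] and every second one +-e_k the sign [snd_sign z k];
   so no two pairs of the same colour are opposite in either coordinate. *)
Section SignedDesign.
Variable m : nat.
Local Notation J := 'I_m.+2.
Local Notation S := (signed m.+2).

Definition design_col (a b : S) : S :=
  match a, b with
  | None, _ => b
  | Some (true, j), None => Some (true, j)
  | Some (false, j), None => Some (false, j - 1)
  | Some (true, j), Some (true, k) => Some (true, j)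
  | Some (false, j), Some (true, k) => if k == 0 then None else Some (true, j + k)
  | Some (true, j), Some (false, k) => Some (false, j)
  | Some (false, j), Some (false, k) =>
      if k == 1 then None else Some (false, j + k - 1)
  end.

Definition design_idx (a b : S) : S :=
  match a, b with
  | None, _ => None
  | Some (false, j), Some (false, _) => Some (false, j)
  | Some (false, j), _ => Some (true, j)
  | Some (true, j), None => Some (true, j)
  | Some (true, j), Some (true, k) => Some (false, k)
  | Some (true, j), Some (false, k) =>
      if k == j + 1 then Some (false, j) else Some (true, k)
  end.

Definition design_dec (z t : S) : S * S :=
  match t with
  | None => (None, z)
  | Some (st, jt) =>
    match z with
    | None => if st then (Some (false, jt), Some (true, 0))
              else (Some (false, jt), Some (false, 1))
    | Some (true, i) =>
        if st then (if jt == i then (Some (true, i), None)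
                    else (Some (false, jt), Some (true, i - jt)))
        else (Some (true, i), Some (true, jt))
    | Some (false, i) =>
        if st then (if jt == i + 1 then (Some (false, jt), None)
                    else (Some (true, i), Some (false, jt)))
        else (if jt == i then (Some (true, i), Some (false, i + 1))
              else (Some (false, jt), Some (false, i - jt + 1)))
    end
  end.

Lemma design_decK a b : design_dec (design_col a b) (design_idx a b) = (a, b).
Proof.
case: a => [[[] j]|]; case: b => [[[] k]|] //=.
- by case: (k =P j + 1) => [->|/eqP/negbTE kj] /=; rewrite ?kj ?eqxx.
- by rewrite eqxx.
- case: (k =P 0) => [->|/eqP/negbTE k0] //=.
  by rewrite eq_sym addr_eq_l k0 [j + k]addrC addrK.
- case: (k =P 1) => [->|/eqP/negbTE k1] //=.
  rewrite eq_sym -addrA addr_eq_l subr_eq0 k1.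
  by rewrite [j + (k - 1)]addrC addrK subrK.
- by rewrite subrK eqxx.
Qed.

Definition fst_sign (z : S) (j : J) : bool := if z is Some (_, i) then j == i else false.
Definition snd_sign (z : S) (k : J) : bool := if z is Some (s, _) then s else k == 0.

Definition fits_fst (z a : S) := if a is Some (s, j) then s == fst_sign z j else true.
Definition fits_snd (z b : S) := if b is Some (s, k) then s == snd_sign z k else true.

Lemma design_col_fits a b : fits_fst (design_col a b) a && fits_snd (design_col a b) b.
Proof.
case: a => [[[] j]|]; case: b => [[[] k]|] //=; rewrite ?eqxx //.
- case: (k =P 0) => [->|/eqP k0] /=; first by rewrite !eqxx.
  by rewrite [j == _]eq_sym addr_eq_l (negbTE k0).
- case: (k =P 1) => [->|/eqP k1] /=; first by rewrite (negbTE (oner_neq0 _)).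
  by rewrite [j == _]eq_sym -addrA addr_eq_l subr_eq0 (negbTE k1).
- by rewrite [j == _]eq_sym addr_eq_l oppr_eq0 (negbTE (oner_neq0 _)).
Qed.

Lemma design_col_None_inj a a' : design_col a None = design_col a' None -> a = a'.
Proof.
case: a => [[[] j]|]; case: a' => [[[] k]|] //=; try by case.
by move=> /(congr1 (fun o : S => if o is Some (_, i) then i + 1 else 0)) /=; rewrite !subrK => ->.
Qed.

Lemma design_separates a b a' b' :
  design_col a b = design_col a' b' -> (a, b) != (a', b') ->
  [/\ a' != sopp a, b' != sopp b & design_idx a b != design_idx a' b'].
Proof.
move=> E ne; split.
- apply/eqP => Ea; case: a Ea E ne => [[s j]|] Ea E ne; last first.
    by move: E ne; rewrite Ea /= => ->; rewrite eqxx.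
  have := design_col_fits (Some (s, j)) b; have := design_col_fits a' b'.
  rewrite -E Ea /= => /andP[/eqP h1 _] /andP[/eqP h2 _].
  by move: h1; rewrite -h2; case: (s).
- apply/eqP => Eb; case: b Eb E ne => [[s k]|] Eb E ne; last first.
    by move: E ne; rewrite Eb /= => /design_col_None_inj ->; rewrite eqxx.
  have := design_col_fits a (Some (s, k)); have := design_col_fits a' b'.
  rewrite -E Eb /= => /andP[_ /eqP h1] /andP[_ /eqP h2].
  by move: h1; rewrite -h2; case: (s).
- apply: contra ne => /eqP Eidx.
  by rewrite -design_decK -[(a', b')]design_decK E Eidx.
Qed.

End SignedDesign.

Lemma pair_design_pchar2 (F0 F1 : finFieldType) :
  2 \in [pchar F0] -> (#|F0| <= #|F1|)%N ->
  [|| 2 \in [pchar F1], #|F0| <= 2 | 5 <= #|F1|]%N ->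
  exists (c : F0 -> F1 -> F1) (idx : F0 -> F1 -> F0), pair_design c idx.
Proof.
move=> F2 F01 cond; have [g [g_inj g_sep]] := exists_separating F01 cond.
exists g, (fun a _ => a) => a b a' b' E ne.
have aa' : a != a'.
  by apply: contra ne => /eqP aa'; move: E; rewrite aa' => /g_inj ->.
by split=> //; [rewrite addr_eq0 (oppr_pchar2 F2) | exact: g_sep E].
Qed.

Definition swiden h h' (hh' : (h <= h')%N) (a : signed h) : signed h' :=
  if a is Some (s, j) then Some (s, widen_ord hh' j) else None.

Lemma swiden_inj h h' (hh' : (h <= h')%N) : injective (swiden hh').
Proof. by case=> [[s j]|]; case=> [[s' j']|] //= [-> /val_inj ->]. Qed.

Lemma swiden_opp h h' (hh' : (h <= h')%N) a : swiden hh' (sopp a) = sopp (swiden hh' a).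
Proof. by case: a => [[s j]|]. Qed.

Lemma dec_opp h (F : finFieldType) (enc : signed h -> F) dec :
  cancel enc dec -> cancel dec enc -> (forall a, enc (sopp a) = - enc a) ->
  forall x, dec (- x) = sopp (dec x).
Proof. by move=> encK decK encN x; rewrite -{1}(decK x) -encN encK. Qed.

Lemma pair_design_odd (F0 F1 : finFieldType) :
  2 \notin [pchar F0] -> 2 \notin [pchar F1] -> (#|F0| <= #|F1|)%N -> (5 <= #|F1|)%N ->
  exists (I : finType) (c : F0 -> F1 -> F1) (idx : F0 -> F1 -> I),
    #|I| = #|F1| /\ pair_design c idx.
Proof.
move=> F02 F12 F01 F15.
have [h0 [enc0 [[dec0 e0K d0K] enc0N F0h]]] := signed_model F02.
have [h1 [enc1 [[dec1 e1K d1K] enc1N F1h]]] := signed_model F12.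
have h01 : (h0 <= h1)%N by move: F01; rewrite F0h F1h -!addnn; lia.
(* |F1| >= 5 gives h1 >= 2, so that the design on [signed h1] is available. *)
case: h1 enc1 dec1 e1K d1K enc1N F1h h01 => [|[|m]] enc1 dec1 e1K d1K enc1N F1h h01;
  try by move: F15; rewrite F1h.
pose A a := swiden h01 (dec0 a).
have A_inj : injective A by move=> x y /swiden_inj /(can_inj d0K).
have AN a : A (- a) = sopp (A a) by rewrite /A (dec_opp e0K d0K enc0N) swiden_opp.
exists (signed m.+2), (fun a b => enc1 (design_col (A a) (dec1 b))),
  (fun a b => design_idx (A a) (dec1 b)).
split=> [|a b a' b' /(can_inj e1K) E ne]; first by rewrite card_signed F1h.
have ne' : (A a, dec1 b) != (A a', dec1 b').
  by apply: contra ne => /eqP [/A_inj -> /(can_inj d1K) ->].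
have [na nb ni] := design_separates E ne'; split => //.
- by apply: contra na; rewrite addrC addr_eq0 => /eqP ->; rewrite AN.
- by apply: contra nb; rewrite addrC addr_eq0 => /eqP ->; rewrite (dec_opp e1K d1K enc1N).
Qed.

Lemma card_pchar_exp (F : finFieldType) (p : nat) :
  p \in [pchar F] -> #|F| = (p ^ logn p #|F|)%N.
Proof. exact: card_pprimeChar. Qed.

Lemma card_pchar2_neq3 (F : finFieldType) : 2 \in [pchar F] -> #|F| != 3%N.
Proof.
move=> F2; rewrite (card_pchar_exp F2); case: (logn _ _) => [|[|k]] //.
by rewrite !expnS; apply/eqP => /(congr1 odd); rewrite !oddM.
Qed.

Lemma odd_card_pchar (F : finFieldType) : 2 \notin [pchar F] -> odd #|F|.
Proof.
have [p p_pr Fp] := finPcharP F; rewrite (card_pchar_exp Fp) oddX => F2.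
by case: (even_prime p_pr) => [p2|->]; [subst p; rewrite Fp in F2 | rewrite orbT].
Qed.

Lemma separating_cond_pchar2 (F0 F : finFieldType) :
  2 \in [pchar F0] -> (#|F0| <= #|F|)%N ->
  [|| 2 \in [pchar F], #|F0| <= 2 | 5 <= #|F|]%N.
Proof.
move=> F02 F0F; have [//|F2] := boolP (2 \in [pchar F]).
have F0_neq3 := card_pchar2_neq3 F02; have F_odd := odd_card_pchar F2.
have [//|F0_gt2 /=] := leqP #|F0| 2.
have F_ge4 : (3 < #|F|)%N.
  by apply: leq_trans F0F; rewrite ltn_neqAle eq_sym F0_neq3.
by rewrite ltn_neqAle F_ge4 andbT; apply: contraTneq F_odd => <-.
Qed.

Lemma chi_total_pchar2 n (F : 'I_n -> finFieldType) (i0 i1 : 'I_n) :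
  i0 != i1 -> 2 \in [pchar F i0] -> (forall i, #|F i0| <= #|F i|)%N ->
  chi_total F = #|zero_slice F i0|.
Proof.
move=> i01 F02 le0; have cond i := separating_cond_pchar2 F02 (le0 i).
have [c [idx c_design]] := pair_design_pchar2 F02 (le0 i1) (cond i1).
apply: (chi_total_of_design i01 c_design) => i _ _.
exact: exists_separating (le0 i) (cond i).
Qed.

Lemma chi_total_odd n (F : 'I_n -> finFieldType) (i0 i1 : 'I_n) :
  i0 != i1 -> (forall i, 2 \notin [pchar F i]) ->
  (#|F i0| <= #|F i1|)%N -> (5 <= #|F i1|)%N ->
  (forall i, i != i0 -> #|F i1| <= #|F i|)%N ->
  chi_total F = #|zero_slice F i0|.
Proof.
move=> i01 F2 le01 F15 le1.
have [I [c [idx [cardI c_design]]]] := pair_design_odd (F2 i0) (F2 i1) le01 F15.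
apply: (chi_total_of_design i01 c_design) => i i0i _.
apply: exists_separating; rewrite cardI ?le1 //.
by rewrite (leq_trans F15 (le1 i i0i)) !orbT.
Qed.

Section CardThree.
Variables (F : finFieldType) (F3 : #|F| = 3%N).

Lemma pchar3 : 3%N \in [pchar F].
Proof. by apply: (card_finPcharP (n := 1)); rewrite ?F3. Qed.

Definition Z3_to (k : 'Z_3) : F := (val k)%:R.

Lemma Z3_toD : {morph Z3_to : k l / k + l}.
Proof.
move=> k l; rewrite /Z3_to -natrD -(GRing.natr_mod_pchar pchar3 (val k + val l)).
by case: k l => [k ?] [l ?].
Qed.

Lemma Z3_toM : {morph Z3_to : k l / k * l}.
Proof.
move=> k l; rewrite /Z3_to -natrM -(GRing.natr_mod_pchar pchar3 (val k * val l)).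
by case: k l => [k ?] [l ?].
Qed.

Lemma Z3_to_inj : injective Z3_to.
Proof.
move=> k l E; apply: val_inj.
wlog kl : k l E / (val k <= val l)%N.
  by move=> wlog_kl; case: (leqP (val k) (val l)) => [|/ltnW] /wlog_kl ->.
move/eqP: E; rewrite eq_sym -subr_eq0 /Z3_to -natrB // -(GRing.dvdn_pcharf pchar3).
have k3 : (val k < 3)%N := ltn_ord k; have l3 : (val l < 3)%N := ltn_ord l.
by move/dvdn_leq; lia.
Qed.

Lemma Z3_to_inv_morph : exists phi : F -> 'Z_3,
  [/\ cancel Z3_to phi, cancel phi Z3_to, {morph phi : x y / x + y}
    & {morph phi : x y / x * y}].
Proof.
have [phi toK ofK] := inj_card_bij Z3_to_inj (eq_leq (etrans F3 (esym (card_ord 3)))).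
by exists phi; split=> // x y; rewrite -{1}(ofK x) -{1}(ofK y) -?Z3_toD -?Z3_toM toK.
Qed.

End CardThree.

Lemma card3_prod_iso (F0 F1 : finFieldType) : #|F0| = 3%N -> #|F1| = 3%N ->
  exists f : {rmorphism (F0 * F1)%type -> ('Z_3 * 'Z_3)%type}, bijective f.
Proof.
move=> F03 F13.
have [phi0 [toK0 ofK0 D0 M0]] := Z3_to_inv_morph F03.
have [phi1 [toK1 ofK1 D1 M1]] := Z3_to_inv_morph F13.
pose f (x : F0 * F1) : ('Z_3 * 'Z_3)%type := (phi0 x.1, phi1 x.2).
have fN : nmod_morphism f.
  split=> [|[x0 x1] [y0 y1]]; last by rewrite /f /= D0 D1.
  by rewrite /f /= (toK0 0 : phi0 0 = 0) (toK1 0 : phi1 0 = 0).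
have fM : monoid_morphism f.
  split=> [|[x0 x1] [y0 y1]]; last by rewrite /f /= M0 M1.
  by rewrite /f /= (toK0 1 : phi0 1 = 1) (toK1 1 : phi1 1 = 1).
pose fR : {rmorphism (F0 * F1)%type -> ('Z_3 * 'Z_3)%type} :=
  HB.pack f (GRing.isNmodMorphism.Build _ _ f fN) (GRing.isMonoidMorphism.Build _ _ f fM).
exists fR.
exists (fun z => (Z3_to F0 z.1, Z3_to F1 z.2)) => [[x0 x1]|[z0 z1]] /=.
  by rewrite ofK0 ofK1.
by rewrite /f /= toK0 toK1.
Qed.

Lemma five_le_card_odd (F0 F1 : finFieldType) :
  2 \notin [pchar F0] -> 2 \notin [pchar F1] -> (#|F0| <= #|F1|)%N ->
  ~ (exists f : {rmorphism (F0 * F1)%type -> ('Z_3 * 'Z_3)%type}, bijective f) ->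
  (5 <= #|F1|)%N.
Proof.
move=> F02 F12 F01 no_iso; rewrite leqNgt; apply/negP => F1_lt5; apply: no_iso.
have odd3 (F : finFieldType) : 2 \notin [pchar F] -> (#|F| < 5)%N -> #|F| = 3%N.
  move=> /odd_card_pchar; have := finNzRing_gt1 F.
  by case: #|F| => [|[|[|[|[|k]]]]].
have F13 := odd3 _ F12 F1_lt5.
by apply: card3_prod_iso => //; apply: odd3 => //; rewrite -F13 in F1_lt5 *; lia.
Qed.

Theorem lemma12 (n : nat) (hn : (1 < n)%N) (F : 'I_n -> finFieldType)
  (hsize : forall i j : 'I_n, (i <= j)%N -> (#|F i| <= #|F j|)%N)
  (hcase :
     (2 \in [pchar (F (Ordinal (ltnW hn)))])%N
     \/ ((forall i : 'I_n, exists p : nat, p \in [pchar (F i)] /\ odd p)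
         /\ ~ (exists f : {rmorphism (F (Ordinal (ltnW hn)) * F (Ordinal hn))%type
                                 -> ('Z_3 * 'Z_3)%type}, bijective f))) :
  chi_total F = (\prod_(i < n | (0 < i)%N) #|F i|)%N.
Proof.
set i0 := Ordinal (ltnW hn) in hcase *; set i1 := Ordinal hn in hcase *.
have -> : (\prod_(i < n | (0 < i)%N) #|F i|)%N = #|zero_slice F i0|.
  by rewrite card_zero_slice; apply: eq_bigl => i; rewrite -val_eqE /= lt0n.
case: hcase => [F02 | [F_odd no_iso]].
  by apply: (chi_total_pchar2 (i1 := i1)) => // i; apply: hsize.
have F2 i : 2 \notin [pchar F i].
  by have [p [Fp p_odd]] := F_odd i; rewrite (pcharf_eq Fp); apply: contraL p_odd => /eqP <-.
have le01 : (#|F i0| <= #|F i1|)%N by apply: hsize.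
apply: (@chi_total_odd _ _ i0 i1 isT F2 le01 (five_le_card_odd (F2 i0) (F2 i1) le01 no_iso)).
by move=> i; rewrite -val_eqE /= -lt0n => i_pos; apply: hsize.
Qed.
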